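(* Let $Q$ be a non-trivial free abelian pro-$p$ group of finite rank and let $Y$ be the set of all epimorphisms of pro-$p$ groups $\varphi:Q\to Q_1$, where $Q_1\cong\mathbb{Z}_p$. For $\varphi\in Y$ let $\hat\varphi:\mathbb{F}_p[[Q]]\to\mathbb{F}_p[[Q_1]]$ be the continuous ring homomorphism induced by $\varphi$. Then $\bigcap_{\varphi\in Y}\ker(\hat\varphi)=0$.
   Context: $\mathbb{F}_p[[Q]]$ denotes the completed group algebra of the pro-$p$ group $Q$ over $\mathbb{F}_p$. *)

From HB Require Import structures.
From mathcomp Require Import all_boot all_order all_algebra.
Set Implicit Arguments. Unset Strict Implicit. Unset Printing Implicit Defensive.
Import GRing.Theory.

(* p-adic integers Z_p, modelled as compatible sequences of residues:  *)
(* x k is the residue of x modulo p^k (so 0 <= x k < p^k), and          *)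
(* x (k+1) reduces to x k modulo p^k.                                   *)
Definition is_zp (p : nat) (x : nat -> nat) : Prop :=
  forall k, (x k < p ^ k)%N /\ (x k.+1 %% p ^ k)%N = x k.

Definition zadd (p : nat) (x y : nat -> nat) : nat -> nat :=
  fun k => ((x k + y k) %% p ^ k)%N.

Definition natzp (p m : nat) : nat -> nat := fun k => (m %% p ^ k)%N.

(* The free abelian pro-p group Q = Z_p^n of rank n. *)
Definition isQ (p n : nat) (x : 'I_n -> nat -> nat) : Prop :=
  forall i, is_zp p (x i).

Definition qadd (p n : nat) (x y : 'I_n -> nat -> nat) : 'I_n -> nat -> nat :=
  fun i => zadd p (x i) (y i).

(* it maps Q into Z_p, is additive, continuous (for the p-adic          *)
(* topologies, whose basic neighbourhoods of 0 are p^k Z_p), and onto.  *)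
Definition is_epi (p n : nat) (phi : ('I_n -> nat -> nat) -> (nat -> nat)) : Prop :=
  [/\ (forall x, isQ p x -> is_zp p (phi x)),
      (forall x y, isQ p x -> isQ p y ->
          forall k, phi (qadd p x y) k = zadd p (phi x) (phi y) k),
      (forall k, exists m, forall x y, isQ p x -> isQ p y ->
          (forall i, x i m = y i m) -> phi x k = phi y k)
    & (forall z, is_zp p z -> exists2 x, isQ p x & forall k, phi x k = z k)].

(* Completed group algebra F_p[[Q]] = lim_k F_p[Q / p^k Q],             *)
(* with Q / p^k Q = (Z/p^k)^n.  An element of level k of the group       *)
(* algebra F_p[(Z/p^k)^n] is a function (Z/p^k)^n -> F_p.                *)
Definition lvl (p n k : nat) : finType := {ffun 'I_n -> 'I_(p ^ k)}.

Definition cga_raw (p n : nat) : Type :=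
  forall k : nat, {ffun lvl p n k -> 'F_p}.

(* compatibility with the transition maps F_p[Q/p^(k+1)Q] -> F_p[Q/p^kQ] *)
Definition is_cga (p n : nat) (f : cga_raw p n) : Prop :=
  forall (k : nat) (g : lvl p n k),
    f k g = (\sum_(h : lvl p n k.+1 | [forall i, (h i %% p ^ k)%N == g i]) f k.+1 h)%R.

(* The map Q/p^kQ -> Z_p/p^kZ_p induced by phi (computed on the lift    *)
(* of a residue class to Q given by natural-number representatives).    *)
Definition phi_lvl (p n : nat) (phi : ('I_n -> nat -> nat) -> (nat -> nat))
  (k : nat) (g : lvl p n k) : nat :=
  phi (fun i => natzp p (g i)) k.

(* The induced map hat phi : F_p[[Q]] -> F_p[[Z_p]] = lim F_p[Z/p^k],   *)
(* at level k: the linear extension of phi_lvl.                         *)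
Definition hatphi_lvl (p n : nat) (phi : ('I_n -> nat -> nat) -> (nat -> nat))
  (f : cga_raw p n) (k : nat) (c : nat) : 'F_p :=
  (\sum_(g : lvl p n k | phi_lvl phi g == c) f k g)%R.

Definition in_ker (p n : nat) (phi : ('I_n -> nat -> nat) -> (nat -> nat))
  (f : cga_raw p n) : Prop :=
  forall k c, hatphi_lvl phi f k c = 0%R.

From HB Require Import structures.
From mathcomp Require Import all_boot all_order all_algebra.
From mathcomp Require Import ring zify.
Set Implicit Arguments. Unset Strict Implicit. Unset Printing Implicit Defensive.
Import GRing.Theory.
Local Open Scope ring_scope.

(* Only the epimorphisms x |-> x_0 + \sum_(j > 0) p^(M j) x_j of Z_p^n onto Z_p are needed.
   An element f of F_p[[Z_p^n]] is a compatible family of F_p-valued measures f_L on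
   (Z/p^L)^n, and the hypothesis says that the pushforward of f_L along each of these maps
   reduced mod p^L vanishes.  Coordinates are split off one at a time by a two-variable
   lemma: if the pushforward of mu along A + p^M B mod p^l1 vanishes for every M, then so
   does its pushforward along (A, B) mod p^l, provided l1 is large enough.  Encoding mu as
   G = \sum_t mu_t X^(A t) Y^(B t), the hypothesis says that (X - 1)^(p^l1) divides
   G(X, X^(p^M)).  Dividing G successively by Y - X^(p^i), i < 2 p^l - 1, loses a bounded
   amount of (X - 1)-adic valuation, and the product of these factors lies in
   (X - 1, Y - 1)^(2 p^l - 1), hence in ((X - 1)^(p^l), (Y - 1)^(p^l)) =
   (X^(p^l) - 1, Y^(p^l) - 1), whose elements have vanishing residue-class sums mod p^l.
   After n - 1 steps the pushforward of f_L along reduction mod p^k vanishes, and by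
   compatibility of the family this pushforward is f_k. *)

Section ClassSum.
Variables (R : nzRingType) (m : nat).

Definition class_sum (j : nat) (q : {poly R}) : R :=
  \sum_(i < size q | (i %% m)%N == j) q`_i.

Lemma class_sum_widen j (q : {poly R}) B : (size q <= B)%N ->
  class_sum j q = \sum_(i < B | (i %% m)%N == j) q`_i.
Proof.
move=> leqB; rewrite /class_sum.
rewrite (big_ord_widen_cond _ (fun i => (i %% m)%N == j) (fun i => q`_i) leqB).
rewrite [RHS]big_mkcond [LHS]big_mkcond; apply: eq_bigr => i _.
by case: ((i %% m)%N == j) => //=; case: ltnP => // le_q_i; rewrite nth_default.
Qed.

Lemma class_sum_is_zmod_morphism j : zmod_morphism (class_sum j).
Proof.
move=> q1 q2; set B := maxn (size q1) (size q2).
rewrite (@class_sum_widen _ _ B); last first.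
  by apply: leq_trans (size_polyD _ _) _; rewrite size_polyN.
rewrite (@class_sum_widen _ q1 B) ?leq_maxl // (@class_sum_widen _ q2 B) ?leq_maxr //.
by rewrite -sumrB; apply: eq_bigr => i _; rewrite coefB.
Qed.

HB.instance Definition _ j := GRing.isZmodMorphism.Build {poly R} R (class_sum j)
  (class_sum_is_zmod_morphism j).

Lemma class_sum_sum j (I : Type) (r : seq I) (P : pred I) (F : I -> {poly R}) :
  class_sum j (\sum_(i <- r | P i) F i) = \sum_(i <- r | P i) class_sum j (F i).
Proof. exact: raddf_sum. Qed.

Lemma class_sumCM j c (q : {poly R}) : class_sum j (c%:P * q) = c * class_sum j q.
Proof.
rewrite (@class_sum_widen _ _ (size q)); last by rewrite mul_polyC size_scale_leq.
by rewrite /class_sum mulr_sumr; apply: eq_bigr => i _; rewrite coefCM.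
Qed.

Lemma class_sumXn j b : class_sum j 'X^b = ((b %% m)%N == j)%:R.
Proof.
rewrite /class_sum size_polyXn big_mkcond big_ord_recr /= coefXn eqxx.
rewrite big1 ?add0r => [|i _]; first by case: eqP.
by rewrite coefXn (ltn_eqF (ltn_ord i)); case: ifP.
Qed.

Lemma class_sumXnM j (q : {poly R}) : (0 < m)%N -> class_sum j ('X^m * q) = class_sum j q.
Proof.
move=> m_gt0; rewrite (@class_sum_widen _ _ (m + size q)); last first.
  by apply: leq_trans (size_polyMleq _ _) _; rewrite size_polyXn.
rewrite (@class_sum_widen _ q (size q + m)) ?leq_addr //.
rewrite big_split_ord /= big1 ?add0r => [|i _]; last by rewrite coefXnM ltn_ord.
rewrite big_split_ord /= [X in _ = _ + X]big1 ?addr0 => [|i _]; last first.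
  by rewrite nth_default //= leq_addr.
apply: eq_big => [i|i _] /=; first by rewrite modnDl.
by rewrite coefXnM ltnNge leq_addr /= addKn.
Qed.

Lemma class_sum_Xnsub1M j (q : {poly R}) : (0 < m)%N -> class_sum j (('X^m - 1) * q) = 0.
Proof. by move=> m_gt0; rewrite mulrBl mul1r raddfB /= class_sumXnM ?subrr. Qed.

End ClassSum.

Definition class_sum2 (R : nzRingType) m i j (Z : {poly {poly R}}) : R :=
  class_sum m i (class_sum m j Z).

Lemma class_sum2D (R : nzRingType) m i j (Z1 Z2 : {poly {poly R}}) :
  class_sum2 m i j (Z1 + Z2) = class_sum2 m i j Z1 + class_sum2 m i j Z2.
Proof. by rewrite /class_sum2 !raddfD. Qed.

Lemma dvdp_sum (R : idomainType) (I : Type) (r : seq I) (P : pred I) (F : I -> {poly R}) d :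
  (forall i, P i -> d %| F i) -> d %| \sum_(i <- r | P i) F i.
Proof.
by move=> dF; apply: (big_ind (fun q => d %| q)); [exact: dvdp0 | exact: dvdp_add |].
Qed.

Lemma dvdp_Xnsub1_class_sum (R : idomainType) m (q : {poly R}) :
  (forall j, class_sum m j q = 0) -> ('X^m - 1) %| q.
Proof.
move=> q_cl0; rewrite -[q]coefK poly_def.
have -> : \sum_(i < size q) q`_i *: 'X^i = \sum_(i < size q) q`_i *: ('X^(i %% m) : {poly R})
    + \sum_(i < size q) q`_i *: ('X^i - 'X^(i %% m) : {poly R}).
  by rewrite -big_split; apply: eq_bigr => i _ /=; rewrite -scalerDr addrC subrK.
have -> : \sum_(i < size q) q`_i *: 'X^(i %% m) = 0.
  apply/polyP => w; rewrite coef_sum coef0; transitivity (class_sum m w q); last exact: q_cl0.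
  rewrite /class_sum [RHS]big_mkcond.
  by apply: eq_bigr => i _; rewrite coefZ coefXn eq_sym; case: eqP; rewrite ?mulr1 ?mulr0.
rewrite add0r; apply: dvdp_sum => i _.
rewrite -mul_polyC dvdp_mull // {1}(divn_eq i m) exprD mulnC exprM.
by rewrite -{2}['X^(i %% m)]mul1r -mulrBl (subrX1 'X^m) -mulrA dvdp_mulr.
Qed.

Lemma exprB_pchar (R : comNzRingType) p i (x y : R) : p \in [pchar R] ->
  (x - y) ^+ (p ^ i) = x ^+ (p ^ i) - y ^+ (p ^ i).
Proof.
move=> pR.
have pn : [pchar R].-nat (p ^ i)%N.
  by rewrite pnatX pnatE ?pR //; exact: pcharf_prime pR.
by rewrite exprDn_pchar // exprNn_pchar.
Qed.

Lemma XsubC1_exp_pchar (R : comNzRingType) p i : p \in [pchar R] ->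
  ('X - 1 : {poly R}) ^+ (p ^ i) = 'X^(p ^ i) - 1.
Proof. by move=> pR; rewrite exprB_pchar ?expr1n // pchar_poly. Qed.

Lemma prod_subrM_split (R : comNzRingType) (x y : R) (c : nat -> R) N a b :
  (a + b = N.+1)%N -> exists u v, \prod_(i < N) (y - x * c i) = x ^+ a * u + y ^+ b * v.
Proof.
elim: N a b => [|N IHN] a b hab.
all: set P := \prod_(i < _) _.
all: have [-> | a_gt0] := posnP a; first by exists P, 0; rewrite expr0 mul1r mulr0 addr0.
all: have [-> | b_gt0] := posnP b; first by exists 0, P; rewrite expr0 mul1r mulr0 add0r.
  by lia.
have [u1 [v1 e1]] := IHN a.-1 b ltac:(lia).
have [u2 [v2 e2]] := IHN a b.-1 ltac:(lia).
exists (u2 * y - u1 * c N), (v2 - v1 * x * c N).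
rewrite /P big_ord_recr /= mulrBr mulrA {1}e2 e1.
rewrite -(prednK a_gt0) -(prednK b_gt0) !exprS /=; ring.
Qed.

Section NullPushforward.
Variables (R : nzRingType) (T : finType).

Definition null_pushforward (X : Type) (mu : T -> R) (v : T -> X) : Prop :=
  forall psi : X -> R, \sum_t mu t * psi (v t) = 0.

Lemma null_pushforward_factor (X Y : Type) mu (v : T -> X) (w : T -> Y) (h : X -> Y) :
  null_pushforward mu v -> (forall t, w t = h (v t)) -> null_pushforward mu w.
Proof. by move=> nv wE psi; under eq_bigr do rewrite wE; exact: (nv (psi \o h)). Qed.

Lemma null_pushforward_fiber (X : eqType) mu (v : T -> X) x :
  null_pushforward mu v -> \sum_(t | v t == x) mu t = 0.
Proof.
move=> nv; rewrite -[RHS](nv (fun y => (y == x)%:R)) big_mkcond.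
by apply: eq_bigr => t _; rewrite mulr_natr mulrb.
Qed.

Lemma sum_partition_bounded m (P : pred T) (a : T -> nat) (F : T -> nat -> R) :
  (forall t, a t < m)%N ->
  \sum_(t | P t) F t (a t) = \sum_(x < m) \sum_(t | P t && (a t == x)) F t x.
Proof.
move=> a_lt; rewrite (partition_big (fun t => Ordinal (a_lt t)) xpredT) //.
apply: eq_bigr => x _; apply: eq_big => [t | t /andP[_ /eqP <-]] //; by rewrite -val_eqE.
Qed.

Lemma null_pushforward_bounded m mu (a : T -> nat) :
  (forall t, a t < m)%N -> (forall x, \sum_(t | a t == x) mu t = 0) ->
  null_pushforward mu a.
Proof.
move=> a_lt fibers psi.
rewrite (@sum_partition_bounded m xpredT a (fun t x => mu t * psi x) a_lt).
by apply: big1 => x _; rewrite -mulr_suml fibers mul0r.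
Qed.

End NullPushforward.

Section CharacteristicP.
Variables (F : fieldType) (p : nat).
Hypothesis pF : p \in [pchar F].

Lemma Xpow_sub_Xpow_factor i j : (i < j)%N ->
  exists2 V : {poly F}, 'X^(p ^ j) - 'X^(p ^ i) = ('X - 1) ^+ (p ^ i) * V & ~~ root V 1.
Proof.
move=> lt_ij; set q := (p ^ (j - i))%N.
have q_gt0 : (0 < q)%N by rewrite expn_gt0 prime_gt0 // (pcharf_prime pF).
pose W : {poly F} := 'X * \sum_(l < q.-1) 'X ^+ l.
have XqBX : 'X^q - 'X = ('X - 1) * W.
  by rewrite /W mulrCA -subrX1 mulrBr mulr1 -exprS prednK.
exists (W ^+ (p ^ i)).
  by rewrite -exprMn -XqBX exprB_pchar ?pchar_poly // -!exprM -expnD subnK // ltnW.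
have q0 : q%:R = 0 :> F.
  by apply/eqP; rewrite -(dvdn_pcharf pF) dvdn_exp // subn_gt0.
rewrite /root horner_exp /W hornerM hornerX mul1r horner_sum.
under eq_bigr do rewrite hornerXn expr1n.
rewrite sumr_const card_ord -subn1 natrB // q0 sub0r expf_neq0 //.
by rewrite oppr_eq0 oner_eq0.
Qed.

Lemma dvdp_XsubC1_cancel i j B (h : {poly F}) : (i < j)%N ->
  ('X - 1) ^+ B %| ('X^(p ^ j) - 'X^(p ^ i)) * h -> ('X - 1) ^+ (B - p ^ i) %| h.
Proof.
move=> /Xpow_sub_Xpow_factor[V -> V1]; rewrite -mulrA mulrC -mulrA.
have coV : coprimep (('X - 1) ^+ B) V.
  by apply: coprimep_expl; rewrite coprimep_sym -polyC1 coprimep_XsubC.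
rewrite Gauss_dvdpr // mulrC.
have [le_B_pi | lt_pi_B] := leqP B (p ^ i).
  by rewrite (eqP le_B_pi) expr0 dvd1p.
rewrite -{1}(subnKC (ltnW lt_pi_B)) exprD dvdp_mul2l // expf_neq0 //.
by rewrite -polyC1 polyXsubC_eq0.
Qed.

Lemma dvdp_XsubC1_cancel_prod j l B (h : {poly F}) : (l <= j)%N ->
  ('X - 1) ^+ B %| (\prod_(i < l) ('X^(p ^ j) - 'X^(p ^ i))) * h ->
  ('X - 1) ^+ (B - \sum_(i < l) p ^ i)%N %| h.
Proof.
elim: l B h => [|l IHl] B h le_lj; first by rewrite !big_ord0 mul1r subn0.
rewrite big_ord_recr /= -mulrA => /(IHl _ _ (ltnW le_lj)).
by move/(dvdp_XsubC1_cancel le_lj); rewrite big_ord_recr /= subnDA.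
Qed.

Definition peel_loss N := (\sum_(j < N) \sum_(i < j) p ^ i)%N.

Lemma peel_roots (G : {poly {poly F}}) P N :
  (forall M, (M < N)%N -> ('X - 1) ^+ P %| G.['X^(p ^ M)]) ->
  exists H E, G = \prod_(i < N) ('X - ('X^(p ^ i))%:P) * H
                  + (('X - 1) ^+ (P - peel_loss N))%:P * E.
Proof.
elim: N => [|N IHN] divG.
  by exists G, 0; rewrite big_ord0 mul1r mulr0 addr0.
have [H [E defG]] := IHN (fun M ltMN => divG M (ltnW ltMN)).
set s := (P - peel_loss N)%N in defG.
set s' := (P - peel_loss N.+1)%N.
have le_s's : (s' <= s)%N by rewrite /s' /s /peel_loss big_ord_recr leq_sub2l ?leq_addr.
have HN : ('X - 1) ^+ s' %| H.['X^(p ^ N)].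
  have -> : s' = (s - \sum_(i < N) p ^ i)%N.
    by rewrite /s' /s /peel_loss big_ord_recr subnDA.
  apply: (dvdp_XsubC1_cancel_prod (leqnn N)).
  rewrite -(dvdp_addl _ (dvdp_mulr E.['X^(p ^ N)] (dvdpp (('X - 1) ^+ s)))).
  apply: dvdp_trans (dvdp_exp2l _ (leq_subr _ P)) _.
  have := divG N (ltnSn N); rewrite {1}defG hornerD hornerM horner_prod hornerCM.
  by under eq_bigr do rewrite hornerXsubC.
have /factor_theorem[Q defQ] : root (H - H.['X^(p ^ N)]%:P) 'X^(p ^ N).
  by rewrite /root hornerD hornerN hornerC subrr.
have /dvdpP[c defc] := HN.
exists Q, (\prod_(i < N) ('X - ('X^(p ^ i))%:P) * c%:P + (('X - 1) ^+ (s - s'))%:P * E).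
rewrite defG -[H](subrK H.['X^(p ^ N)]%:P) defQ defc big_ord_recr /=.
by rewrite -(subnKC le_s's) exprD addKn !polyCM; ring.
Qed.

Lemma class_sum2_prod_XsubXpow l i0 j0 (H : {poly {poly F}}) :
  class_sum2 (p ^ l) i0 j0 (\prod_(i < (2 * p ^ l).-1) ('X - ('X^(p ^ i))%:P) * H) = 0.
Proof.
set N := (2 * p ^ l).-1; pose c i : {poly {poly F}} := (('X - 1) ^+ (p ^ i).-1)%:P.
have p_gt0 := prime_gt0 (pcharf_prime pF).
have -> : \prod_(i < N) ('X - ('X^(p ^ i))%:P) =
         \prod_(i < N) (('X - 1) - ('X - 1)%:P * c i).
  apply: eq_bigr => i _; rewrite /c -polyCM -exprS prednK ?expn_gt0 ?p_gt0 //.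
  by rewrite (XsubC1_exp_pchar _ pF) polyCB polyC1 opprB addrA subrK.
have N2 : (p ^ l + p ^ l = N.+1)%N.
  by rewrite /N prednK ?muln_gt0 ?expn_gt0 ?p_gt0 // addnn mul2n.
have [u [v ->]] := prod_subrM_split ('X - 1)%:P ('X - 1) c N2.
rewrite mulrDl -!mulrA class_sum2D -rmorphXn /= (XsubC1_exp_pchar _ pF) /class_sum2.
rewrite (XsubC1_exp_pchar _ (_ : p \in [pchar {poly F}])) ?pchar_poly //.
rewrite [class_sum _ j0 (_ * (u * H))]class_sumCM class_sum_Xnsub1M ?expn_gt0 ?p_gt0 //.
by rewrite [class_sum _ j0 _]class_sum_Xnsub1M ?expn_gt0 ?p_gt0 // raddf0 addr0.
Qed.

Lemma class_sums_two_var (T : finType) (mu : T -> F) (A B : T -> nat) l l1 :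
  (p ^ l + peel_loss (2 * p ^ l).-1 <= p ^ l1)%N ->
  (forall M w, \sum_(t | ((A t + p ^ M * B t) %% p ^ l1)%N == w) mu t = 0) ->
  forall i0 j0, \sum_(t | ((A t %% p ^ l)%N == i0) && ((B t %% p ^ l)%N == j0)) mu t = 0.
Proof.
move=> le_loss fibersAB i0 j0; set N := (2 * p ^ l).-1 in le_loss.
have pl_gt0 : (0 < p ^ l)%N by rewrite expn_gt0 prime_gt0 // (pcharf_prime pF).
pose G : {poly {poly F}} := \sum_t (mu t *: 'X^(A t))%:P * 'X^(B t).
have divG M : ('X - 1) ^+ (p ^ l1) %| G.['X^(p ^ M)].
  rewrite (XsubC1_exp_pchar _ pF); apply: dvdp_Xnsub1_class_sum => w.
  rewrite -(fibersAB M w) horner_sum class_sum_sum [RHS]big_mkcond; apply: eq_bigr => t _.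
  rewrite /= hornerM hornerC hornerXn -exprM -scalerAl -exprD -mul_polyC class_sumCM.
  by rewrite class_sumXn mulr_natr mulrb.
have [H [E defG]] := @peel_roots G _ N (fun M _ => divG M).
have class_sum2G : class_sum2 (p ^ l) i0 j0 G =
    \sum_(t | ((A t %% p ^ l)%N == i0) && ((B t %% p ^ l)%N == j0)) mu t.
  rewrite /class_sum2 [class_sum _ j0 _]class_sum_sum class_sum_sum.
  rewrite [RHS]big_mkcond; apply: eq_bigr => t _ /=.
  rewrite [class_sum _ j0 _]class_sumCM class_sumXn mulr_natr mulrb.
  case: eqP => _; rewrite ?andbT ?andbF ?raddf0 //.
  by rewrite -mul_polyC class_sumCM class_sumXn mulr_natr mulrb.
have class_sum2E : class_sum2 (p ^ l) i0 j0 ((('X - 1) ^+ (p ^ l1 - peel_loss N))%:P * E) = 0.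
  have le_m : (p ^ l <= p ^ l1 - peel_loss N)%N by lia.
  rewrite /class_sum2 [class_sum _ j0 _]class_sumCM -(subnKC le_m) exprD.
  by rewrite (XsubC1_exp_pchar _ pF) -mulrA class_sum_Xnsub1M.
by rewrite -class_sum2G defG class_sum2D class_sum2_prod_XsubXpow class_sum2E add0r.
Qed.

Lemma null_pushforward_two_var l : exists2 l1, (l <= l1)%N &
  forall (T : finType) (mu : T -> F) (A B : T -> nat) (X : Type) (Z : T -> X),
    (forall M, null_pushforward mu (fun t => (((A t + p ^ M * B t) %% p ^ l1)%N, Z t))) ->
    null_pushforward mu (fun t => ((A t %% p ^ l)%N, (B t %% p ^ l)%N, Z t)).
Proof.
have p_gt1 := prime_gt1 (pcharf_prime pF).
set l1 := (p ^ l + peel_loss (2 * p ^ l).-1)%N.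
exists l1; first exact: leq_trans (ltnW (ltn_expl l p_gt1)) (leq_addr _ _).
move=> T mu A B X Z nAB psi.
have lt_mod x : (x %% p ^ l < p ^ l)%N by rewrite ltn_pmod // expn_gt0 (ltnW p_gt1).
rewrite (@sum_partition_bounded _ _ _ xpredT (fun t => A t %% p ^ l)%N
  (fun t a => mu t * psi (a, (B t %% p ^ l)%N, Z t)) (fun t => lt_mod _)).
apply: big1 => a0 _.
rewrite (@sum_partition_bounded _ _ _ _ (fun t => B t %% p ^ l)%N
  (fun t b => mu t * psi (nat_of_ord a0, b, Z t)) (fun t => lt_mod _)).
apply: big1 => b0 _.
(* The parameter Z rides along: psi (a0, b0, Z t) is absorbed into the weights. *)
have := @class_sums_two_var T (fun t => mu t * psi (nat_of_ord a0, nat_of_ord b0, Z t))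
  A B l l1 (ltnW (ltn_expl l1 p_gt1)).
move=> core; rewrite -[RHS](core _ a0 b0); first exact: eq_bigl.
move=> M w.
rewrite -[RHS](nAB M (fun xz => (xz.1 == w)%:R * psi (nat_of_ord a0, nat_of_ord b0, xz.2))).
rewrite big_mkcond; apply: eq_bigr => t _ /=.
by rewrite mulr_natl mulrb; case: ifP; rewrite ?mulr0.
Qed.

End CharacteristicP.

Section LinearForms.
Variables (p n : nat).

Definition lin_coef (M : nat -> nat) (d : nat) (j : 'I_n) : nat :=
  if nat_of_ord j == 0%N then 1%N else if (d <= j)%N then (p ^ M j)%N else 0%N.

Definition lin_form M d (g : 'I_n -> nat) : nat := (\sum_j lin_coef M d j * g j)%N.

Lemma eq_lin_form M d (g g' : 'I_n -> nat) :
  (forall j, g j = g' j) -> lin_form M d g = lin_form M d g'.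
Proof. by move=> gE; apply: eq_bigr => j _; rewrite gE. Qed.

Lemma lin_form_modn M d (g : 'I_n -> nat) m :
  (lin_form M d g %% m = lin_form M d (fun j => g j %% m) %% m)%N.
Proof.
rewrite /lin_form -[LHS]modn_summ -[RHS]modn_summ; congr (_ %% _)%N.
by apply: eq_bigr => j _; rewrite modnMmr.
Qed.

Lemma lin_formD M d (g g' : 'I_n -> nat) :
  lin_form M d (fun j => g j + g' j)%N = (lin_form M d g + lin_form M d g')%N.
Proof. by rewrite /lin_form -big_split; apply: eq_bigr => j _; rewrite mulnDr. Qed.

Lemma lin_form_split M d k (dI : 'I_n) g : nat_of_ord dI = d -> (0 < d)%N ->
  lin_form (fun j => if j == d then k else M j) d g = (lin_form M d.+1 g + p ^ k * g dI)%N.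
Proof.
move=> dIE d_gt0; have d_neq0 := negbTE (lt0n_neq0 d_gt0).
rewrite /lin_form (bigD1 dI) // [in RHS](bigD1 dI) //=.
rewrite {1 3}/lin_coef dIE d_neq0 eqxx leqnn ltnn mul0n add0n addnC; congr (_ + _)%N.
apply: eq_bigr => j ne_j_dI; rewrite /lin_coef.
case: ltngtP => // eq_dj.
by case/eqP: ne_j_dI; apply: val_inj; rewrite /= -eq_dj dIE.
Qed.

Lemma lin_form_last M g (i0 : 'I_n) : nat_of_ord i0 = 0%N -> lin_form M n g = g i0.
Proof.
move=> i0E; rewrite /lin_form (bigD1 i0) //= big1 => [|j ne_j_i0].
  by rewrite /lin_coef i0E addn0 mul1n.
rewrite /lin_coef; case: eqP => [j0 | _]; last by rewrite leqNgt ltn_ord.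
by case/eqP: ne_j_i0; apply: val_inj; rewrite /= j0 i0E.
Qed.

End LinearForms.

Section Stages.
Variables (F : fieldType) (p n : nat).
Hypothesis pF : p \in [pchar F].

Definition head_coords (d l : nat) (g : 'I_n -> nat) : {ffun 'I_n -> nat} :=
  [ffun i : 'I_n => if (0 < i < d)%N then (g i %% p ^ l)%N else 0%N].

Definition stage_null (T : finType) (mu : T -> F) (gv : T -> 'I_n -> nat) d l :=
  forall M, null_pushforward mu
    (fun t => ((lin_form p M d (gv t) %% p ^ l)%N, head_coords d l (gv t))).

Lemma stage_null_step d l : (0 < d < n)%N -> exists2 l1, (l <= l1)%N &
  forall (T : finType) mu gv, @stage_null T mu gv d l1 -> stage_null mu gv d.+1 l.
Proof.
case/andP=> d_gt0 lt_dn; have [l1 le_l_l1 two_var] := null_pushforward_two_var pF l.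
exists l1 => // T mu gv null_d M; set dI := Ordinal lt_dn.
pose upd (abz : nat * nat * {ffun 'I_n -> nat}) :=
  (abz.1.1, [ffun i => if i == dI then abz.1.2 else abz.2 i]).
apply: (null_pushforward_factor (h := upd) (two_var T mu (fun t => lin_form p M d.+1 (gv t))
  (fun t => gv t dI) _ (fun t => head_coords d l (gv t)) _)) => [M'|t].
  pose M'' j := if j == d then M' else M j.
  apply: (null_pushforward_factor (null_d M'')
    (h := fun az : nat * {ffun 'I_n -> nat} => (az.1, [ffun i => (az.2 i %% p ^ l)%N]))) => t.
  rewrite /= (@lin_form_split p n M d M' dI) //; congr (_, _); apply/ffunP => i.
  by rewrite !ffunE; case: ifP; rewrite ?mod0n // modn_dvdm // dvdn_exp2l.
congr (_, _); apply/ffunP => i; rewrite !ffunE /=.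
have [-> | ne_i_dI] := eqVneq i dI; first by rewrite /= d_gt0 ltnSn.
rewrite [(i < d.+1)%N]ltnS [(i <= d)%N]leq_eqVlt; case: eqP => [i_d|]; last by rewrite orFb.
by case/eqP: ne_i_dI; apply: val_inj.
Qed.

Lemma stage_null_chain l : (0 < n)%N -> exists2 L, (l <= L)%N &
  forall (T : finType) mu gv, @stage_null T mu gv 1 L -> stage_null mu gv n l.
Proof.
move=> n_gt0; suff chain d : (0 < d <= n)%N -> forall l, exists2 L, (l <= L)%N &
    forall (T : finType) mu gv, @stage_null T mu gv 1 L -> stage_null mu gv d l.
  by apply: chain; rewrite n_gt0 leqnn.
elim: d => [//|d IHd] /andP[_ lt_dn] {}l.
have [-> | d_gt0] := posnP d; first by exists l.
have [l1 le_l_l1 step] := stage_null_step l (introT andP (conj d_gt0 lt_dn)).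
have [L le_l1_L chainL] := IHd (introT andP (conj d_gt0 (ltnW lt_dn))) l1.
by exists L => [|T mu gv /chainL /step //]; exact: leq_trans le_l_l1 le_l1_L.
Qed.

Lemma stage_null_last (T : finType) mu gv k (g0 : 'I_n -> nat) : (0 < n)%N ->
  @stage_null T mu gv n k -> \sum_(t | [forall i, (gv t i %% p ^ k)%N == g0 i]) mu t = 0.
Proof.
move=> n_gt0 /(_ (fun _ => 0%N)) null_n; set i0 : 'I_n := Ordinal n_gt0.
pose h (az : nat * {ffun 'I_n -> nat}) :=
  (az.1 == g0 i0) && [forall i : 'I_n, (0 < i)%N ==> (az.2 i == g0 i)].
have null_b : null_pushforward mu (fun t => [forall i, (gv t i %% p ^ k)%N == g0 i]).
  apply: (null_pushforward_factor null_n (h := h)) => t.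
  rewrite /h /= (@lin_form_last p n _ _ i0) //.
  apply/forallP/andP => [all_i | [eq_i0 /forallP eq_i] i].
    split=> //; apply/forallP => i; apply/implyP => i_gt0; rewrite ffunE i_gt0 ltn_ord.
    exact: all_i.
  have [i_eq0 | i_gt0] := posnP i; first by rewrite (_ : i = i0) //; exact: val_inj.
  by have := eq_i i; rewrite ffunE i_gt0 ltn_ord.
by rewrite -[RHS](null_pushforward_fiber true null_b); apply: eq_bigl => t; rewrite eqb_id.
Qed.

End Stages.

Section Epimorphisms.
Variables (p n : nat).
Hypotheses (p_pr : prime p) (n_gt0 : (0 < n)%N).

Definition phi_lin (M : nat -> nat) : ('I_n -> nat -> nat) -> nat -> nat :=
  fun x k => (lin_form p M 1 (fun j => x j k) %% p ^ k)%N.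

Lemma phi_lin_epi M : is_epi p (phi_lin M).
Proof.
have p_gt0 := prime_gt0 p_pr.
split.
- move=> x Qx k; split; first by rewrite /phi_lin ltn_pmod // expn_gt0 p_gt0.
  rewrite /phi_lin modn_dvdm ?dvdn_exp2l // lin_form_modn [RHS]lin_form_modn.
  congr (_ %% _)%N; apply: eq_lin_form => j.
  by rewrite (proj2 (Qx j k)) modn_small ?(proj1 (Qx j k)).
- by move=> x y _ _ k; rewrite /phi_lin /qadd /zadd modnDm -lin_formD [RHS]lin_form_modn.
- by move=> k; exists k => x y _ _ xy_k; rewrite /phi_lin (eq_lin_form _ _ _ xy_k).
move=> z Zz; set i0 : 'I_n := Ordinal n_gt0.
exists (fun i => if i == i0 then z else fun=> 0%N) => [i k | k].
  by case: eqP => _; [exact: Zz | rewrite mod0n expn_gt0 p_gt0].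
rewrite /phi_lin /lin_form (bigD1 i0) //= big1 ?addn0 => [|j /negbTE->].
  by rewrite /lin_coef /= mul1n modn_small //; case: (Zz k).
by rewrite muln0.
Qed.

Lemma stage_null_of_ker (f : cga_raw p n) L :
  (forall M, in_ker (phi_lin M) f) -> stage_null p (f L) (fun h i => nat_of_ord (h i)) 1 L.
Proof.
move=> f_ker M.
pose a (h : lvl p n L) := (lin_form p M 1 (fun i => nat_of_ord (h i)) %% p ^ L)%N.
have a_lt h : (a h < p ^ L)%N by rewrite ltn_pmod // expn_gt0 prime_gt0.
apply: (null_pushforward_factor (null_pushforward_bounded a_lt _)
  (h := fun x => (x, [ffun=> 0%N]))).
  move=> c; rewrite -[RHS](f_ker M L c); apply: eq_bigl => h; congr (_ == _).
  rewrite /a /phi_lvl /phi_lin /natzp; congr (_ %% _)%N.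
  by apply: eq_lin_form => j; rewrite modn_small.
by move=> h; congr (_, _); apply/ffunP => i; rewrite !ffunE; case: ifP => // /andP[]; lia.
Qed.

End Epimorphisms.

Lemma cga_fiber_sum p n (f : cga_raw p n) k L (g : lvl p n k) : prime p -> is_cga f ->
  (k <= L)%N -> f k g = \sum_(h : lvl p n L | [forall i, (h i %% p ^ k)%N == g i]) f L h.
Proof.
move=> p_pr f_cga le_kL; move: (L - k)%N (subnK le_kL) => d <-.
have p_gt0 := prime_gt0 p_pr.
elim: d => [|d IHd].
  rewrite /= (big_pred1 g) // => h /=.
  apply/forallP/eqP => [h_g|->]; last by move=> i; rewrite modn_small.
  apply/ffunP => i; apply: val_inj => /=; move/eqP: (h_g i); rewrite modn_small //.
rewrite IHd; set K := (d + k)%N.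
have pK_gt0 : (0 < p ^ K)%N by rewrite expn_gt0 p_gt0.
pose red (h : lvl p n K.+1) : lvl p n K := [ffun i => Ordinal (ltn_pmod (val (h i)) pK_gt0)].
have dvd_kK : (p ^ k %| p ^ K)%N by rewrite dvdn_exp2l // leq_addl.
change (\sum_(h : lvl p n K | [forall i, (h i %% p ^ k)%N == g i]) f K h =
  \sum_(h : lvl p n K.+1 | [forall i, (h i %% p ^ k)%N == g i]) f K.+1 h).
rewrite (partition_big red (fun h' : lvl p n K => [forall i, (h' i %% p ^ k)%N == g i]));
  last first.
  by move=> h /forallP h_g; apply/forallP => i; rewrite ffunE /= modn_dvdm //; exact: h_g.
apply: eq_bigr => h' /forallP h'_g; rewrite f_cga; apply: eq_bigl => h.
apply/forallP/andP => [h_g|[_ /eqP <-] i]; last by rewrite ffunE.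
split; first by apply/forallP => i; rewrite -(modn_dvdm _ dvd_kK) (eqP (h_g i)); exact: h'_g.
by apply/eqP/ffunP => i; apply: val_inj; rewrite ffunE /=; move/eqP: (h_g i).
Qed.

Theorem lemma7p1 (p n : nat) (hp : prime p) (hn : (0 < n)%N)
  (f : cga_raw p n) (hf : is_cga f) :
  (forall phi : ('I_n -> nat -> nat) -> (nat -> nat), @is_epi p n phi -> in_ker phi f) ->
  forall (k : nat) (g : lvl p n k), f k g = 0%R.
Proof.
move=> f_ker k g.
have [L le_kL chain] := stage_null_chain (pchar_Fp hp) k hn.
rewrite (cga_fiber_sum g hp hf le_kL).
apply: (stage_null_last (fun i => nat_of_ord (g i)) hn).
apply/chain/stage_null_of_ker => // M.
exact/f_ker/phi_lin_epi.
Qed.
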